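(* Let $p\in(0,1/2)$, $\varepsilon>0$, and let $\mathcal{C}\subseteq\mathbb{F}_2^n$ be a fixed linear code with $T_{\mathcal{C}}<1$ (so $S_{\mathcal{C}}<2$). Then $$\Pr_{b\sim\mathbb{F}_2^n}\left[S_{\mathcal{C}+\{0,b\}}>1+2T_{\mathcal{C}}+T_{\mathcal{C}}^{1.5}\right]<T_{\mathcal{C}}^{0.5},$$ where $b$ is uniform in $\mathbb{F}_2^n$.
   Context: $L_{\mathcal{C}}(x)=|\{c\in\mathcal{C}:\Delta(x,c)\le pn\}|$ with $\Delta$ Hamming distance; $A_{\mathcal{C}}(x)=2^{\frac{\varepsilon n L_{\mathcal{C}}(x)}{1+\varepsilon}}$, $S_{\mathcal{C}}=\mathbb{E}_{x\sim\mathbb{F}_2^n}[A_{\mathcal{C}}(x)]$ ($x$ uniform), and $T_{\mathcal{C}}=S_{\mathcal{C}}-1$. $\mathcal{C}+\{0,b\}=\mathcal{C}\cup(\mathcal{C}+b)$. *)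

From mathcomp Require Import all_boot all_order all_algebra.
From Stdlib Require Import Reals.

Set Implicit Arguments.
Unset Strict Implicit.
Unset Printing Implicit Defensive.

Import GRing.Theory.

Notation vec n := 'rV['F_2]_n.

Definition hamming (n : nat) (x y : vec n) : nat :=
  #|[set i : 'I_n | x ord0 i != y ord0 i]|.

(* linear code over F_2: contains 0 and closed under addition
   (scalar multiplication by F_2 = {0,1} is then automatic) *)
Definition linear_code (n : nat) (C : {set vec n}) : Prop :=
  (GRing.zero \in C) /\ (forall x y, x \in C -> y \in C -> GRing.add x y \in C).

(* C + {0,b} = C ∪ (C + b) *)
Definition code_add_b (n : nat) (C : {set vec n}) (b : vec n) : {set vec n} :=
  C :|: [set GRing.add c b | c in C].

Local Open Scope R_scope.

Definition Lc (p : R) (n : nat) (C : {set vec n}) (x : vec n) : nat :=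
  #|[set c in C | if Rle_dec (INR (hamming x c)) (p * INR n) then true else false]|.

Definition Ac (p eps : R) (n : nat) (C : {set vec n}) (x : vec n) : R :=
  Rpower 2 (eps * INR n * INR (Lc p C x) / (1 + eps)).

Definition Sc (p eps : R) (n : nat) (C : {set vec n}) : R :=
  (\big[Rplus/0]_(x : vec n) Ac p eps C x) / (2 ^ n).

Definition Tc (p eps : R) (n : nat) (C : {set vec n}) : R := Sc p eps C - 1.

Definition prob_b (n : nat) (P : vec n -> bool) : R :=
  INR #|[set b : vec n | P b]| / (2 ^ n).

Definition Rltb (x y : R) : bool := if Rlt_dec x y then true else false.

(* Adding b to C adds at most L_C(x + b) to L_C(x), so A_{C+{0,b}}(x) <= A_C(x) A_C(x + b)
   and 2^n S_{C+{0,b}} is at most the correlation K(b) = sum_x A_C(x) A_C(x + b).  Averaged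
   over b, K has mean 2^n S_C^2, while A_C >= 1 forces K(b) >= 2^n (2 S_C - 1) = 2^n (1 + 2 T_C).
   Markov's inequality for the nonnegative excess K(b) - 2^n (1 + 2 T_C), of mean 2^n T_C^2,
   at level 2^n T_C^(3/2) gives the bound T_C^(1/2), strictly because T_C > 0 (0 lies in C). *)

From Pilot Require Import Defs.
From mathcomp Require Import all_boot all_order all_algebra.
From Stdlib Require Import Reals Lra.
From mathcomp Require Import Rstruct.
(* Rstruct also defines an [Rltb]; the statement uses the one of Defs. *)
Import Defs.
Import GRing.Theory.

Local Open Scope ring_scope.

Lemma F2_eq_addr (u v w : 'F_2) : (u == v + w) = (u + w == v).
Proof. by rewrite -subr_eq (oppr_pchar2 (pchar_Fp _)). Qed.

Lemma hamming_addr n (x c b : vec n) : hamming x (c + b) = hamming (x + b) c.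
Proof. by apply: eq_card => i; rewrite !inE !mxE F2_eq_addr. Qed.

Lemma card_code_add_b_le n (C : {set vec n}) (b : vec n) (Q : vec n -> vec n -> bool) x :
  (forall y c, Q y (c + b) = Q (y + b) c) ->
  leq #|[set c in code_add_b C b | Q x c]|
      (addn #|[set c in C | Q x c]| #|[set c in C | Q (x + b) c]|).
Proof.
move=> Q_shift; rewrite /code_add_b.
have -> : [set c in C :|: [set c + b | c in C] | Q x c] =
          [set c in C | Q x c] :|: [set c in [set c + b | c in C] | Q x c].
  by apply/setP => y; rewrite !inE andb_orl.
apply: leq_trans (leq_card_setU _ _) _; rewrite leq_add2l.
apply: leq_trans (leq_imset_card (+%R^~ b) [set c in C | Q (x + b) c]).
apply: subset_leq_card; apply/subsetP => _ /setIdP[/imsetP[c cC ->] Qc].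
by apply/imsetP; exists c; rewrite // inE cC -Q_shift.
Qed.

Local Close Scope ring_scope.
Local Open Scope R_scope.

Lemma card_vec n : INR #|vec n| = 2 ^ n.
Proof.
rewrite card_mx card_Fp // mul1n.
by elim: n => [|n IHn] //=; rewrite expnS mult_INR IHn.
Qed.

Section FiniteRealSums.

Context {I : finType}.

Lemma iter_Rplus k (c : R) : iter k (Rplus c) 0 = INR k * c.
Proof. by elim: k => [|k IHk]; rewrite ?iterS ?IHk ?S_INR /=; lra. Qed.

Lemma Rsum_const (c : R) : \big[Rplus/0]_(i : I) c = INR #|I| * c.
Proof. by rewrite big_const iter_Rplus. Qed.

Lemma Rsum_le (F G : I -> R) :
  (forall i, F i <= G i) -> \big[Rplus/0]_i F i <= \big[Rplus/0]_i G i.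
Proof. by move=> FG; apply: (big_ind2 Rle) => [|? ? ? ? ? ?|i _]; [lra|lra|]. Qed.

Lemma Rsum_lt (F G : I -> R) (i0 : I) :
  (forall i, F i <= G i) -> F i0 < G i0 ->
  \big[Rplus/0]_i F i < \big[Rplus/0]_i G i.
Proof.
move=> FG FG0; rewrite (bigD1 i0) //= [X in _ < X](bigD1 i0) //=.
by apply: Rplus_lt_le_compat => //; apply: (big_ind2 Rle) => [|? ? ? ? ? ?|i _]; [lra|lra|].
Qed.

Lemma markov_card_lt (g : I -> R) (t : R) :
  (forall i, 0 <= g i) -> 0 < t -> 0 < \big[Rplus/0]_i g i ->
  INR #|[set i | Rltb t (g i)]| * t < \big[Rplus/0]_i g i.
Proof.
move=> g_ge0 t_gt0 sum_gt0; set E := [set i | _].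
have [/eqP -> | /set0Pn [i0 Ei0]] := boolP (E == set0); first by rewrite cards0 /=; lra.
have E_lt i : i \in E -> t < g i by rewrite /E inE /Rltb; case: Rlt_dec.
have -> : INR #|E| * t = \big[Rplus/0]_i (if i \in E then t else 0).
  by rewrite -big_mkcond big_const iter_Rplus.
apply: (Rsum_lt _ _ i0) => [i|]; last by rewrite Ei0; exact: E_lt.
by case: ifP => [/E_lt|_]; [lra | exact: g_ge0].
Qed.

End FiniteRealSums.

Section Autocorrelation.

Context {V : finZmodType} (A : V -> R).

Lemma sum_autocorrelation :
  \big[Rplus/0]_(b : V) \big[Rplus/0]_(x : V) (A x * A (GRing.add x b))
  = \big[Rplus/0]_(x : V) A x * \big[Rplus/0]_(x : V) A x.
Proof.
rewrite exchange_big /= big_distrl /=; apply: eq_bigr => x _.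
by rewrite -big_distrr /= [in RHS](reindex_inj (addrI x)).
Qed.

Lemma autocorrelation_ge (b : V) : (forall x, 1 <= A x) ->
  2 * \big[Rplus/0]_(x : V) A x - INR #|V| <= \big[Rplus/0]_(x : V) (A x * A (GRing.add x b)).
Proof.
move=> A_ge1.
have shift : \big[Rplus/0]_(x : V) A (GRing.add x b) = \big[Rplus/0]_(x : V) A x.
  by rewrite [RHS](reindex_inj (addIr b)).
have le_sums : \big[Rplus/0]_(x : V) (A x + A (GRing.add x b))
               <= \big[Rplus/0]_(x : V) (A x * A (GRing.add x b) + 1).
  by apply: Rsum_le => x; have := A_ge1 x; have := A_ge1 (GRing.add x b); nra.
rewrite !big_split /= shift Rsum_const in le_sums.
set SA := \big[Rplus/0]_(x : V) A x in le_sums *.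
set N := INR #|V| in le_sums *.
set F := \big[Rplus/0]_(x : V) (A x * A (GRing.add x b)) in le_sums *.
lra.
Qed.

End Autocorrelation.

Section CodeExtension.

Context (p eps : R) {n : nat}.
Hypothesis eps_gt0 : 0 < eps.

Let rate := eps * INR n / (1 + eps).

Lemma rate_ge0 : 0 <= rate.
Proof.
apply: Rmult_le_pos; last by apply/Rlt_le/Rinv_0_lt_compat; lra.
by apply: Rmult_le_pos; [lra | exact: pos_INR].
Qed.

Lemma AcE (C : {set vec n}) x : Ac p eps C x = Rpower 2 (rate * INR (Lc p C x)).
Proof. by rewrite /Ac /rate /Rdiv; congr Rpower; ring. Qed.

Lemma Lc_code_add_b_le (C : {set vec n}) b x :
  leq (Lc p (code_add_b C b) x) (addn (Lc p C x) (Lc p C (GRing.add x b))).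
Proof.
apply: (@card_code_add_b_le n C b
  (fun y c => if Rle_dec (INR (hamming y c)) (p * INR n) then true else false)).
by move=> y c; rewrite hamming_addr.
Qed.

Lemma Ac_ge1 (C : {set vec n}) x : 1 <= Ac p eps C x.
Proof.
rewrite AcE -(Rpower_O 2); last lra.
apply: Rle_Rpower; first lra.
by apply: Rmult_le_pos; [exact: rate_ge0 | exact: pos_INR].
Qed.

Lemma Ac_code_add_b_le (C : {set vec n}) b x :
  Ac p eps (code_add_b C b) x <= Ac p eps C x * Ac p eps C (GRing.add x b).
Proof.
rewrite !AcE -Rpower_plus -Rmult_plus_distr_l -plus_INR.
apply: Rle_Rpower; first lra.
apply: Rmult_le_compat_l; first exact: rate_ge0.
by apply/le_INR/leP/Lc_code_add_b_le.
Qed.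

Lemma sum_Ac (C : {set vec n}) :
  \big[Rplus/0]_(x : vec n) Ac p eps C x = 2 ^ n * (1 + Tc p eps C).
Proof. by rewrite /Tc /Sc; field; apply: pow_nonzero; lra. Qed.

Lemma Tc_gt0 (C : {set vec n}) :
  (0 < n)%nat -> 0 <= p -> GRing.zero \in C -> 0 < Tc p eps C.
Proof.
move=> n_gt0 p_ge0 C0.
have L0_gt0 : (0 < Lc p C GRing.zero)%nat.
  rewrite card_gt0; apply/set0Pn; exists GRing.zero; rewrite inE C0 /=.
  have -> : hamming (GRing.zero : vec n) GRing.zero = 0%nat.
    by apply: eq_card0 => i; rewrite inE eqxx.
  by case: Rle_dec => // -[]; apply: Rmult_le_pos; [lra | exact: pos_INR].
have A0_gt1 : 1 < Ac p eps C GRing.zero.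
  rewrite AcE -(Rpower_O 2); last lra.
  apply: Rpower_lt; first lra.
  apply: Rmult_lt_0_compat; last exact/lt_0_INR/ltP.
  apply: Rmult_lt_0_compat; last by apply: Rinv_0_lt_compat; lra.
  by apply: Rmult_lt_0_compat; [lra | exact/lt_0_INR/ltP].
have : 2 ^ n < 2 ^ n * (1 + Tc p eps C).
  rewrite -sum_Ac -card_vec -[INR _]Rmult_1_r -Rsum_const.
  by apply: (Rsum_lt _ _ GRing.zero) => // x; apply: Ac_ge1.
have := pow_lt 2 n; nra.
Qed.

Definition correlation (C : {set vec n}) (b : vec n) : R :=
  \big[Rplus/0]_(x : vec n) (Ac p eps C x * Ac p eps C (GRing.add x b)).

Lemma Sc_code_add_b_le (C : {set vec n}) b :
  2 ^ n * Sc p eps (code_add_b C b) <= correlation C b.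
Proof.
rewrite /Sc /Rdiv Rmult_comm Rmult_assoc Rinv_l ?Rmult_1_r; last by apply: pow_nonzero; lra.
by apply: Rsum_le => x; apply: Ac_code_add_b_le.
Qed.

Lemma correlation_ge (C : {set vec n}) b :
  2 ^ n * (1 + 2 * Tc p eps C) <= correlation C b.
Proof.
apply: Rle_trans (autocorrelation_ge (Ac p eps C) b (Ac_ge1 C)).
by rewrite sum_Ac card_vec; lra.
Qed.

Lemma sum_correlation (C : {set vec n}) :
  \big[Rplus/0]_b correlation C b
  = (2 ^ n * (1 + Tc p eps C)) * (2 ^ n * (1 + Tc p eps C)).
Proof. by rewrite sum_autocorrelation sum_Ac. Qed.

End CodeExtension.

Lemma Rpower_half_mul_three_halves x :
  0 < x -> Rpower x (1 / 2) * Rpower x (3 / 2) = x * x.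
Proof.
move=> x_gt0; rewrite -Rpower_plus.
have -> : 1 / 2 + 3 / 2 = INR 2 by rewrite /=; lra.
by rewrite Rpower_pow //= Rmult_1_r.
Qed.

Local Close Scope R_scope.

Theorem lemma3 (n : nat) (p eps : R) (C : {set vec n}) :
  (1 <= n)%N ->
  (0 < p)%R -> (p < 1 / 2)%R -> (0 < eps)%R ->
  linear_code C ->
  (Tc p eps C < 1)%R ->
  (prob_b (fun b : vec n =>
     Rltb (1 + 2 * Tc p eps C + Rpower (Tc p eps C) (3 / 2))%R
          (Sc p eps (code_add_b C b)))
   < Rpower (Tc p eps C) (1 / 2))%R.
Proof.
Local Open Scope R_scope.
move=> n_gt0 p_gt0 _ eps_gt0 [C0 _] _.
set T := Tc p eps C; set N := 2 ^ n; set t := Rpower T (3 / 2).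
have T_gt0 : 0 < T by apply: (Tc_gt0 p eps eps_gt0) => //; lra.
have N_gt0 : 0 < N by apply: pow_lt; lra.
have Nt_gt0 : 0 < N * t by apply: Rmult_lt_0_compat => //; apply: exp_pos.
pose g (b : vec n) := correlation p eps C b - N * (1 + 2 * T).
have g_ge0 b : 0 <= g b.
  by have := correlation_ge p eps eps_gt0 C b; rewrite /g -/T -/N; lra.
have sum_g : \big[Rplus/0]_b g b = N * N * (T * T).
  by rewrite /g big_split /= sum_correlation Rsum_const card_vec -/T -/N; ring.
have NNTT_gt0 : 0 < N * N * (T * T) by do 2!apply: Rmult_lt_0_compat.
have := markov_card_lt _ _ g_ge0 Nt_gt0; rewrite sum_g => /(_ NNTT_gt0).
set E' := [set b | _] => markov.
rewrite /prob_b -/N; set E := [set b | _].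
have /leP/le_INR E_le : leq #|E| #|E'|.
  apply/subset_leq_card/subsetP => b; rewrite !inE /Rltb.
  have := Sc_code_add_b_le p eps eps_gt0 C b; rewrite -/N => le_corr.
  by case: Rlt_dec => // S_gt _; case: Rlt_dec => // -[]; rewrite /g; nra.
have := Rpower_half_mul_three_halves _ T_gt0; rewrite -/t.
set u := Rpower T (1 / 2) => half_t.
apply: (Rmult_lt_reg_r N) => //; rewrite /Rdiv Rmult_assoc Rinv_l ?Rmult_1_r; last lra.
apply: (Rmult_lt_reg_r (N * t)) => //; nra.
Qed.
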